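(* Let $M$ be a finite MDP with state space $S=Z\times\tilde S$ and $p_{\mathrm{maj}},p_{\mathrm{min}}>0$, and let the agent rewards $\rho$ be state-independent, i.e. there is $\tilde\rho\in\mathbb{R}^{A}$ with $\rho_{s,a}=\tilde\rho_a$ for all $s\in S,a\in A$. Then problem (P) has an optimal solution.
   Context: A finite MDP is $M=(S,A,D,P,R,\gamma)$ where $S,A$ are finite nonempty sets, $D$ is a probability distribution on $S$, $P_{s,a,s'}\ge 0$ with $\sum_{s'}P_{s,a,s'}=1$ for all $s,a$, $R\in\mathbb{R}^{S\times A}$, and $\gamma\in(0,1)$. A policy is $\pi\in\mathbb{R}^{S\times A}$ with $\pi_{s,a}\ge0$ and $\sum_a\pi_{s,a}=1$. Let $P^{(\pi)}_{s,s'}=\sum_a\pi_{s,a}P_{s,a,s'}$. For a distribution $\mu$ on $S$ set $\mu^{(\pi,0)}=\mu$, $\mu^{(\pi,t)}_{s'}=\sum_s\mu^{(\pi,t-1)}_sP^{(\pi)}_{s,s'}$, and $\mu^{(\pi)}=(1-\gamma)\sum_{t\ge0}\gamma^t\mu^{(\pi,t)}$. Write $D^{(\pi)}$ for $\mu=D$, $\Lambda^{(\pi)}_{s,a}=D^{(\pi)}_s\pi_{s,a}$, and $R^{(\pi)}=(1-\gamma)^{-1}\sum_{s,a}\Lambda^{(\pi)}_{s,a}R_{s,a}$. Fairness setup: $S=Z\times\tilde S$ with $Z=\{\mathrm{maj},\mathrm{min}\}$ and $\tilde S$ finite nonempty; agent rewards $\rho\in\mathbb{R}^{S\times A}$. For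 $z\in Z$, $p_z=\sum_{\tilde s}D_{(z,\tilde s)}$, $D_z$ is the distribution $(D_z)_s=D_s\cdot\mathbb{I}[s=(z,\tilde s)\text{ for some }\tilde s]/p_z$, $D_z^{(\pi)}$ is $\mu^{(\pi)}$ for $\mu=D_z$, $(\Lambda_z^{(\pi)})_{s,a}=(D_z^{(\pi)})_s\pi_{s,a}$, and $\rho_z^{(\pi)}=\sum_{s,a}(\Lambda_z^{(\pi)})_{s,a}\rho_{s,a}$. A policy satisfies demographic parity if $\rho_{\mathrm{maj}}^{(\pi)}=\rho_{\mathrm{min}}^{(\pi)}$; $\Pi_{\mathrm{DP}}$ is the set of such policies. Problem (P): maximize $R^{(\pi)}$ over $\pi\in\Pi_{\mathrm{DP}}$. *)

From Stdlib Require Import Reals ClassicalEpsilon.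
From mathcomp Require Import all_boot.
Set Implicit Arguments. Unset Strict Implicit. Unset Printing Implicit Defensive.
Open Scope R_scope.

Notation "\rsum_ ( i : T ) F" := (\big[Rplus/R0]_(i : T) F)
  (at level 41, F at level 41, i, T at level 50) : R_scope.

(* value of a convergent series sum_{t>=0} f t (chosen by classical choice;
   equals the sum whenever the series converges) *)
Definition series_val (f : nat -> R) : R :=
  epsilon (inhabits R0) (fun l : R => infinite_sum f l).

Section MDP.
Variables (S A : finType).

Definition is_distr (mu : S -> R) : Prop :=
  (forall s, 0 <= mu s) /\ \rsum_(s : S) mu s = 1.

Definition is_transition (P : S -> A -> S -> R) : Prop :=
  (forall s a s', 0 <= P s a s') /\ (forall s a, \rsum_(s' : S) P s a s' = 1).

Definition is_policy (pi : S -> A -> R) : Prop :=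
  (forall s a, 0 <= pi s a) /\ (forall s, \rsum_(a : A) pi s a = 1).

Definition Ppi (P : S -> A -> S -> R) (pi : S -> A -> R) (s s' : S) : R :=
  \rsum_(a : A) pi s a * P s a s'.

Fixpoint mu_t (P : S -> A -> S -> R) (pi : S -> A -> R) (mu : S -> R) (t : nat)
  : S -> R :=
  match t with
  | O => mu
  | t'.+1 => fun s' => \rsum_(s : S) mu_t P pi mu t' s * Ppi P pi s s'
  end.

Definition occ (P : S -> A -> S -> R) (gamma : R) (pi : S -> A -> R)
  (mu : S -> R) (s : S) : R :=
  (1 - gamma) * series_val (fun t => gamma ^ t * mu_t P pi mu t s).

Definition Lambda P gamma pi mu (s : S) (a : A) : R := occ P gamma pi mu s * pi s a.

Definition Rret (D : S -> R) P (Rw : S -> A -> R) gamma pi : R :=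
  / (1 - gamma) * \rsum_(s : S) \rsum_(a : A) Lambda P gamma pi D s a * Rw s a.
End MDP.

Section Fair.
Inductive Zgrp := maj | min.
Definition Zgrp_eqb (x y : Zgrp) : bool :=
  match x, y with maj, maj | min, min => true | _, _ => false end.

Variables (St A : finType).
(* S = Z x S~, with Z encoded as bool: true = maj, false = min *)
Definition zcode (z : Zgrp) : bool := if z is maj then true else false.
Local Notation S := (bool * St)%type.

Definition pz (D : S -> R) (z : Zgrp) : R := \rsum_(st : St) D (zcode z, st).

Definition Dz (D : S -> R) (z : Zgrp) (s : S) : R :=
  if s.1 == zcode z then D s / pz D z else 0.

Definition rho_z D P gamma (rho : S -> A -> R) pi (z : Zgrp) : R :=
  \rsum_(s : S) \rsum_(a : A) Lambda P gamma pi (Dz D z) s a * rho s a.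

Definition demographic_parity D P gamma rho pi : Prop :=
  rho_z D P gamma rho pi maj = rho_z D P gamma rho pi min.
End Fair.

(* The expected return R^(pi) and both group rewards rho_z^(pi) are values of
   the functional  value mu w pi = sum_{s,a} Lambda^(pi)_{s,a} w_{s,a}  for a
   start distribution mu and a weight w.  Measuring policies by the l1-distance
   dd on S x A, the t-step distributions move by at most t * dd pi pi', so the
   occupancy measure moves by at most gamma/(1-gamma) * dd pi pi' and every
   such value is Lipschitz in the policy.  Policies form a sequentially closed
   subset of [0,1]^(S x A); extracting convergent subsequences coordinate by
   coordinate (Bolzano-Weierstrass), a Lipschitz function attains its maximum
   on any nonempty closed subset of [0,1]^(S x A), and the zero set of a
   Lipschitz function is again closed.  Hence the demographic-parity policies,
   the zero set of the parity gap, form a closed set.  It is nonempty: with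
   state-independent rewards, a constant deterministic policy gives each group
   the reward of its action, because occupancy measures are distributions.
   Maximizing R^(pi) over this set proves the theorem. *)

From Stdlib Require Import Reals Lra ClassicalEpsilon.
From mathcomp Require Import all_boot all_algebra.
From mathcomp Require Import Rstruct.
Import GRing.Theory.
Open Scope R_scope.

Section FiniteSums.
Variable T : finType.

Lemma rsum_le (F G : T -> R) :
  (forall i, F i <= G i) -> \rsum_(i : T) F i <= \rsum_(i : T) G i.
Proof. by move=> H; apply: (big_ind2 (fun a b => a <= b)) => //; [lra | move=> *; lra]. Qed.

Lemma rsum_ge0 (F : T -> R) : (forall i, 0 <= F i) -> 0 <= \rsum_(i : T) F i.
Proof. by move=> H; apply: (big_ind (fun a => 0 <= a)) => //; [lra | move=> *; lra]. Qed.

Lemma rsum_abs (F : T -> R) : Rabs (\rsum_(i : T) F i) <= \rsum_(i : T) Rabs (F i).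
Proof.
apply: (big_ind2 (fun a b => Rabs a <= b)) => [|a b c d h1 h2|i _]; last lra.
- by rewrite Rabs_R0; lra.
- by apply: Rle_trans (Rabs_triang a c) _; lra.
Qed.

Lemma rsum_add (F G : T -> R) :
  \rsum_(i : T) (F i + G i) = \rsum_(i : T) F i + \rsum_(i : T) G i.
Proof. exact: big_split. Qed.

Lemma rsum_mull c (F : T -> R) : \rsum_(i : T) (c * F i) = c * \rsum_(i : T) F i.
Proof. by rewrite -mulr_sumr. Qed.

Lemma rsum_mulr c (F : T -> R) : \rsum_(i : T) (F i * c) = (\rsum_(i : T) F i) * c.
Proof. by rewrite -mulr_suml. Qed.

Lemma rsum_sub (F G : T -> R) :
  \rsum_(i : T) (F i - G i) = \rsum_(i : T) F i - \rsum_(i : T) G i.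
Proof. exact: sumrB. Qed.

Lemma rsum_single (F : T -> R) j : (forall i, 0 <= F i) -> F j <= \rsum_(i : T) F i.
Proof.
move=> H; rewrite (bigD1 j) //=.
have : 0 <= \big[Rplus/R0]_(i | i != j) F i.
  by apply: (big_ind (fun a => 0 <= a)) => //; [lra | move=> *; lra].
lra.
Qed.
End FiniteSums.
Arguments rsum_le {T}. Arguments rsum_ge0 {T}. Arguments rsum_abs {T}.
Arguments rsum_add {T}. Arguments rsum_sub {T}. Arguments rsum_mull {T}.
Arguments rsum_mulr {T}. Arguments rsum_single {T} F.

Section Limits.

Lemma abs_le_inv x c : Rabs x <= c -> - c <= x <= c.
Proof. by rewrite /Rabs; case: (Rcase_abs x) => *; lra. Qed.

Lemma cv_const c : Un_cv (fun _ => c) c.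
Proof. by move=> e he; exists 0%nat => n _; rewrite /Rdist Rminus_diag Rabs_R0. Qed.

Lemma cv_ext u v l : Un_cv u l -> (forall n, u n = v n) -> Un_cv v l.
Proof.
by move=> h e eps he; have [N hN] := h eps he; exists N => n hn; rewrite -e; apply: hN.
Qed.

Lemma lim_le_c u l c : Un_cv u l -> (forall n, u n <= c) -> l <= c.
Proof. by move=> h hb; exact: (@Rle_cv_lim u (fun _ => c) l c hb h (cv_const c)). Qed.

Lemma lim_ge_c u l c : Un_cv u l -> (forall n, c <= u n) -> c <= l.
Proof. by move=> h hb; exact: (@Rle_cv_lim (fun _ => c) u c l hb (cv_const c) h). Qed.

Lemma cv_inv_succ : Un_cv (fun n => / (INR n + 1)) 0.
Proof.
move=> eps he; have [N [hN hN0]] := archimed_cor1 eps he.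
exists N => n hn; rewrite /Rdist Rminus_0_r Rabs_right; last first.
  by apply: Rle_ge; apply: Rlt_le; apply: Rinv_0_lt_compat; have := pos_INR n; lra.
apply: Rle_lt_trans _ hN; apply: Rinv_le_contravar; first exact: lt_0_INR.
have : INR N <= INR n by apply: le_INR.
lra.
Qed.

Lemma cv_dist0 u l : Un_cv u l -> Un_cv (fun n => Rabs (u n - l)) 0.
Proof.
move=> h eps he; have [N hN] := h eps he; exists N => n hn.
by rewrite /Rdist Rminus_0_r Rabs_Rabsolu; apply: hN.
Qed.

Lemma cv_big (I : Type) (r : seq I) (u : I -> nat -> R) (l : I -> R) :
  (forall i, Un_cv (u i) (l i)) ->
  Un_cv (fun n => \big[Rplus/R0]_(i <- r) u i n) (\big[Rplus/R0]_(i <- r) l i).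
Proof.
move=> h; elim: r => [|i r IH].
  by rewrite big_nil; apply: cv_ext (cv_const 0) _ => n; rewrite big_nil.
rewrite big_cons; apply: cv_ext (CV_plus _ _ _ _ (h i) IH) _ => n; by rewrite big_cons.
Qed.

Lemma rsum_sumf (T : finType) (g : T -> nat -> R) N :
  \rsum_(s : T) sum_f_R0 (g s) N = sum_f_R0 (fun t => \rsum_(s : T) g s t) N.
Proof.
elim: N => [|N IH] //.
by rewrite tech5 -IH -rsum_add; apply: eq_bigr => s _; rewrite tech5.
Qed.
End Limits.
Arguments lim_le_c {u l c}. Arguments lim_ge_c {u l c}.

Section PolicyDistance.
Variables S A : finType.

Definition dd (pi pi' : S -> A -> R) : R :=
  \rsum_(s : S) \rsum_(a : A) Rabs (pi s a - pi' s a).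

Definition lipschitz_on (C : (S -> A -> R) -> Prop) (F : (S -> A -> R) -> R) (c : R) :=
  forall pi pi', C pi -> C pi' -> Rabs (F pi - F pi') <= c * dd pi pi'.

Lemma dd_ge0 pi pi' : 0 <= dd pi pi'.
Proof. by apply: rsum_ge0 => s; apply: rsum_ge0 => a; apply: Rabs_pos. Qed.

Lemma abs_le_dd pi pi' s a : Rabs (pi s a - pi' s a) <= dd pi pi'.
Proof.
apply: Rle_trans (rsum_single (fun a => Rabs (pi s a - pi' s a)) a (fun _ => Rabs_pos _)) _.
apply: (rsum_single (fun s => \rsum_(a : A) Rabs (pi s a - pi' s a)) s) => x.
by apply: rsum_ge0 => y; apply: Rabs_pos.
Qed.

Lemma lipschitz_on_subset C C' F c :
  (forall pi, C' pi -> C pi) -> lipschitz_on C F c -> lipschitz_on C' F c.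
Proof. by move=> hC hF pi pi' hp hp'; apply: hF; apply: hC. Qed.

Lemma lipschitz_scale C F c k : 0 <= k -> lipschitz_on C F c ->
  lipschitz_on C (fun pi => k * F pi) (k * c).
Proof.
move=> hk hF pi pi' hp hp'.
rewrite -Rmult_minus_distr_l Rabs_mult Rabs_right ?Rmult_assoc; last lra.
by apply: Rmult_le_compat_l => //; apply: hF.
Qed.

Lemma lipschitz_sub C F G c c' : lipschitz_on C F c -> lipschitz_on C G c' ->
  lipschitz_on C (fun pi => F pi - G pi) (c + c').
Proof.
move=> hF hG pi pi' hp hp'.
have -> : F pi - G pi - (F pi' - G pi') = (F pi - F pi') - (G pi - G pi') by ring.
apply: Rle_trans (Rabs_triang _ _) _; rewrite Rabs_Ropp.
by have := hF _ _ hp hp'; have := hG _ _ hp hp'; lra.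
Qed.

Lemma policy_le1 (pi : S -> A -> R) s a : is_policy pi -> pi s a <= 1.
Proof. by case=> h0 h1; rewrite -(h1 s); apply: (rsum_single (pi s) a (h0 s)). Qed.
End PolicyDistance.
Arguments dd {S A}. Arguments lipschitz_on {S A}. Arguments dd_ge0 {S A}.
Arguments abs_le_dd {S A}. Arguments policy_le1 {S A}.
Arguments lipschitz_on_subset {S A C C' F c}. Arguments lipschitz_scale {S A C F c}.
Arguments lipschitz_sub {S A C F G c c'}.

Section MarkovChain.
Variables (S A : finType) (P : S -> A -> S -> R).
Hypothesis hP : is_transition P.

Lemma Ppi_ge0 pi s s' : is_policy pi -> 0 <= Ppi P pi s s'.
Proof. by case=> hp0 _; apply: rsum_ge0 => a; apply: Rmult_le_pos; [|case: hP]. Qed.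

Lemma Ppi_sum pi s : is_policy pi -> \rsum_(s' : S) Ppi P pi s s' = 1.
Proof.
case=> _ hp1; rewrite /Ppi exchange_big -(hp1 s); apply: eq_bigr => a _.
by rewrite rsum_mull (proj2 hP s a) Rmult_1_r.
Qed.

Lemma mu_t_ge0 pi mu t s :
  is_policy pi -> (forall s, 0 <= mu s) -> 0 <= mu_t P pi mu t s.
Proof.
move=> hp hm; elim: t s => [|t IH] s //=.
by apply: rsum_ge0 => x; apply: Rmult_le_pos; [apply: IH | apply: Ppi_ge0].
Qed.

Lemma mu_t_sum pi mu t :
  is_policy pi -> \rsum_(s : S) mu_t P pi mu t s = \rsum_(s : S) mu s.
Proof.
move=> hp; elim: t => [|t IH] //=.
by rewrite exchange_big -IH; apply: eq_bigr => s _; rewrite rsum_mull Ppi_sum // Rmult_1_r.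
Qed.

Lemma mu_t_le1 pi mu t s : is_policy pi -> is_distr mu -> mu_t P pi mu t s <= 1.
Proof.
move=> hp [hm0 hm1]; rewrite -hm1 -(mu_t_sum pi mu t hp).
exact: (rsum_single (mu_t P pi mu t) s (fun x => mu_t_ge0 pi mu t x hp hm0)).
Qed.

Lemma Ppi_diff pi pi' s :
  \rsum_(s' : S) Rabs (Ppi P pi s s' - Ppi P pi' s s') <=
  \rsum_(a : A) Rabs (pi s a - pi' s a).
Proof.
apply: Rle_trans
  (_ : _ <= \rsum_(s' : S) \rsum_(a : A) (Rabs (pi s a - pi' s a) * P s a s')) _.
  apply: rsum_le => s'; rewrite /Ppi -rsum_sub.
  apply: Rle_trans (rsum_abs _) _; apply: rsum_le => a.
  rewrite -Rmult_minus_distr_r Rabs_mult (Rabs_right (P s a s')); first lra.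
  by apply: Rle_ge; case: hP.
rewrite exchange_big; apply: rsum_le => a.
by rewrite rsum_mull (proj2 hP s a) Rmult_1_r; lra.
Qed.

Lemma mu_t_diff pi pi' mu t : is_policy pi -> is_policy pi' -> is_distr mu ->
  \rsum_(s : S) Rabs (mu_t P pi mu t s - mu_t P pi' mu t s) <= INR t * dd pi pi'.
Proof.
move=> hp hp' hm; elim: t => [|t IH]; rewrite ?S_INR /=.
  rewrite big1 => [|s _]; last by rewrite Rminus_diag Rabs_R0.
  by rewrite Rmult_0_l; lra.
set m := mu_t P pi mu t; set m' := mu_t P pi' mu t.
(* split  m P - m' P'  as  (m - m') P + m' (P - P') *)
apply: Rle_trans (_ : _ <= \rsum_(s' : S)
   (\rsum_(s : S) (Rabs (m s - m' s) * Ppi P pi s s')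
    + \rsum_(s : S) (m' s * Rabs (Ppi P pi s s' - Ppi P pi' s s')))) _.
  apply: rsum_le => s'; rewrite -rsum_sub -rsum_add.
  apply: Rle_trans (rsum_abs _) _; apply: rsum_le => s.
  have -> : m s * Ppi P pi s s' - m' s * Ppi P pi' s s' =
     (m s - m' s) * Ppi P pi s s' + m' s * (Ppi P pi s s' - Ppi P pi' s s') by ring.
  apply: Rle_trans (Rabs_triang _ _) _; rewrite !Rabs_mult.
  rewrite (Rabs_right (Ppi P pi s s')); last by apply: Rle_ge; apply: Ppi_ge0.
  rewrite (Rabs_right (m' s)); last by apply: Rle_ge; apply: mu_t_ge0 => //; case: hm.
  lra.
rewrite rsum_add [X in X + _ <= _]exchange_big [X in _ + X <= _]exchange_big /=.
have -> : \rsum_(s : S) \rsum_(s' : S) (Rabs (m s - m' s) * Ppi P pi s s') =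
    \rsum_(s : S) Rabs (m s - m' s).
  by apply: eq_bigr => s _; rewrite rsum_mull Ppi_sum // Rmult_1_r.
have : \rsum_(s : S) \rsum_(s' : S) (m' s * Rabs (Ppi P pi s s' - Ppi P pi' s s'))
       <= dd pi pi'.
  apply: rsum_le => s; rewrite rsum_mull.
  apply: Rle_trans
    (_ : _ <= 1 * \rsum_(s' : S) Rabs (Ppi P pi s s' - Ppi P pi' s s')) _.
    apply: Rmult_le_compat_r; first by apply: rsum_ge0 => x; apply: Rabs_pos.
    exact: mu_t_le1.
  by rewrite Rmult_1_l; apply: Ppi_diff.
by move: IH; rewrite -/m -/m'; nra.
Qed.
End MarkovChain.
Arguments mu_t_ge0 {S A P}. Arguments mu_t_sum {S A P}. Arguments mu_t_le1 {S A P}.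
Arguments mu_t_diff {S A P}.

Section Geometric.
Variable gamma : R.
Hypothesis hg : 0 < gamma < 1.

Lemma geom_partial_le N : sum_f_R0 (fun t => 1 * gamma ^ t) N <= / (1 - gamma).
Proof.
rewrite (PartSum.sum_eq _ (fun t => gamma ^ t)) => [|i _]; last by ring.
rewrite tech3; last lra.
have h : 0 <= gamma ^ N.+1 by apply: pow_le; lra.
rewrite /Rdiv -[X in _ <= X]Rmult_1_l; apply: Rmult_le_compat_r; last lra.
by apply: Rlt_le; apply: Rinv_0_lt_compat; lra.
Qed.

Lemma tgeom_partial_eq N : sum_f_R0 (fun t => INR t * gamma ^ t) N * (1 - gamma) ^ 2 =
  gamma - INR N.+1 * gamma ^ N.+1 + INR N * gamma ^ N.+2.
Proof.
elim: N => [|N IH]; first by rewrite /=; ring.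
by rewrite tech5 Rmult_plus_distr_r IH !S_INR; cbn [pow]; ring.
Qed.

Lemma tgeom_partial_le N :
  sum_f_R0 (fun t => INR t * gamma ^ t) N <= gamma / (1 - gamma) ^ 2.
Proof.
have hp : 0 < (1 - gamma) ^ 2 by apply: pow_lt; lra.
apply: (Rmult_le_reg_r ((1 - gamma) ^ 2)) => //.
rewrite tgeom_partial_eq /Rdiv Rmult_assoc Rinv_l; last lra.
have h1 : 0 <= gamma ^ N.+1 by apply: pow_le; lra.
have h2 : INR N * gamma ^ N.+2 <= INR N.+1 * gamma ^ N.+1.
  rewrite (S_INR N) [gamma ^ N.+2]/= -/(gamma ^ N.+1).
  have hN : 0 <= INR N by apply: pos_INR.
  have h3 : 0 <= INR N * gamma ^ N.+1 * (1 - gamma).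
    by apply: Rmult_le_pos; [apply: Rmult_le_pos | lra].
  nra.
lra.
Qed.
End Geometric.
Arguments geom_partial_le {gamma}. Arguments tgeom_partial_le {gamma}.

Section Occupancy.
Variable gamma : R.
Hypothesis hg : 0 < gamma < 1.
Variables (S A : finType) (P : S -> A -> S -> R).
Hypothesis hP : is_transition P.

Lemma occ_series pi mu s : is_policy pi -> is_distr mu ->
  Un_cv (sum_f_R0 (fun t => gamma ^ t * mu_t P pi mu t s))
        (series_val (fun t => gamma ^ t * mu_t P pi mu t s)).
Proof.
move=> hp hm.
(* comparison with the geometric series, using 0 <= mu^(pi,t)_s <= 1 *)
have [l hl] : {l | Un_cv (sum_f_R0 (fun t => gamma ^ t * mu_t P pi mu t s)) l}.
  apply: (Rseries_CV_comp _ (fun t => 1 * gamma ^ t)).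
    move=> n; have h0 := mu_t_ge0 hP pi mu n s hp (proj1 hm).
    have h1 := mu_t_le1 hP pi mu n s hp hm.
    have hg0 : 0 <= gamma ^ n by apply: pow_le; lra.
    split; nra.
  by exists (/ (1 - gamma)); apply: (GP_infinite gamma); rewrite Rabs_right; lra.
by apply: (epsilon_spec (inhabits R0)); exists l.
Qed.

Lemma occ_bounds pi mu s : is_policy pi -> is_distr mu ->
  0 <= occ P gamma pi mu s <= 1.
Proof.
move=> hp hm; have hl := occ_series pi mu s hp hm.
set l := series_val _ in hl *.
have hb n : 0 <= sum_f_R0 (fun t => gamma ^ t * mu_t P pi mu t s) n <= / (1 - gamma).
  split.
    apply: cond_pos_sum => t; apply: Rmult_le_pos; first by apply: pow_le; lra.
    exact: mu_t_ge0 hP _ _ _ _ hp (proj1 hm).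
  apply: Rle_trans _ (geom_partial_le hg n); apply: sum_Rle => t _.
  have h0 := mu_t_ge0 hP pi mu t s hp (proj1 hm).
  have h1 := mu_t_le1 hP pi mu t s hp hm.
  have hg0 : 0 <= gamma ^ t by apply: pow_le; lra.
  nra.
have h0 : 0 <= l by apply: (lim_ge_c hl) => n; case: (hb n).
have h1 : l <= / (1 - gamma) by apply: (lim_le_c hl) => n; case: (hb n).
rewrite /occ -/l; split; first by apply: Rmult_le_pos; lra.
have : (1 - gamma) * l <= (1 - gamma) * / (1 - gamma) by apply: Rmult_le_compat_l; lra.
rewrite Rinv_r; lra.
Qed.

Lemma occ_lip pi pi' mu s : is_policy pi -> is_policy pi' -> is_distr mu ->
  Rabs (occ P gamma pi mu s - occ P gamma pi' mu s) <= gamma / (1 - gamma) * dd pi pi'.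
Proof.
move=> hp hp' hm.
have h1 := occ_series pi mu s hp hm; have h2 := occ_series pi' mu s hp' hm.
set f := (fun t => gamma ^ t * mu_t P pi mu t s) in h1 *.
set g := (fun t => gamma ^ t * mu_t P pi' mu t s) in h2 *.
set lf := series_val f in h1 *; set lg := series_val g in h2 *.
have hd := dd_ge0 pi pi'.
(* termwise, |f t - g t| <= gamma^t * t * dd pi pi' *)
have hb n : Rabs (sum_f_R0 f n - sum_f_R0 g n) <= gamma / (1 - gamma) ^ 2 * dd pi pi'.
  rewrite -minus_sum; apply: Rle_trans (sum_f_R0_triangle _ _) _.
  apply: Rle_trans (_ : _ <= sum_f_R0 (fun t => INR t * gamma ^ t * dd pi pi') n) _.
    apply: sum_Rle => t _; rewrite /f /g -Rmult_minus_distr_l Rabs_mult.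
    have hg0 : 0 <= gamma ^ t by apply: pow_le; lra.
    rewrite (Rabs_right (gamma ^ t)); last lra.
    have : Rabs (mu_t P pi mu t s - mu_t P pi' mu t s) <= INR t * dd pi pi'.
      apply: Rle_trans _ (mu_t_diff hP pi pi' mu t hp hp' hm).
      exact: (rsum_single (fun x => Rabs (mu_t P pi mu t x - mu_t P pi' mu t x)) s
                (fun x => Rabs_pos _)).
    nra.
  rewrite -scal_sum Rmult_comm; apply: Rmult_le_compat_r => //.
  exact: tgeom_partial_le.
have hlim : Rabs (lf - lg) <= gamma / (1 - gamma) ^ 2 * dd pi pi'.
  have h3 := CV_minus _ _ _ _ h1 h2.
  apply: Rabs_le; split.
    by apply: (lim_ge_c h3) => n; have /abs_le_inv := hb n; lra.
  by apply: (lim_le_c h3) => n; have /abs_le_inv := hb n; lra.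
rewrite /occ -/f -/g -/lf -/lg -Rmult_minus_distr_l Rabs_mult Rabs_right; last lra.
have -> : gamma / (1 - gamma) = (1 - gamma) * (gamma / (1 - gamma) ^ 2) by field; lra.
by rewrite Rmult_assoc; apply: Rmult_le_compat_l; lra.
Qed.

(* mu^(pi) is a probability distribution: the total mass of every mu^(pi,t)
   is 1, so the total mass of mu^(pi) is (1-gamma) sum_t gamma^t = 1. *)
Lemma occ_sum pi mu : is_policy pi -> is_distr mu -> \rsum_(s : S) occ P gamma pi mu s = 1.
Proof.
move=> hp hm; rewrite /occ rsum_mull.
set L := \rsum_(s : S) _.
have h1 : Un_cv (fun N => \rsum_(s : S) sum_f_R0 (fun t => gamma ^ t * mu_t P pi mu t s) N) L.
  exact: (@cv_big S (index_enum S) (fun s => sum_f_R0 (fun t => gamma ^ t * mu_t P pi mu t s))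
            (fun s => series_val (fun t => gamma ^ t * mu_t P pi mu t s))
            (fun s => occ_series pi mu s hp hm)).
have h2 : Un_cv (sum_f_R0 (fun t => 1 * gamma ^ t)) L.
  apply: cv_ext h1 _ => N; rewrite rsum_sumf; apply: PartSum.sum_eq => t _.
  by rewrite rsum_mull mu_t_sum // (proj2 hm) Rmult_1_r Rmult_1_l.
have h3 : Un_cv (sum_f_R0 (fun t => 1 * gamma ^ t)) (/ (1 - gamma)).
  by apply: (GP_infinite gamma); rewrite Rabs_right; lra.
by rewrite (UL_sequence _ _ _ h2 h3) Rinv_r //; lra.
Qed.
End Occupancy.
Arguments occ_bounds {gamma} hg {S A P} hP. Arguments occ_lip {gamma} hg {S A P} hP.
Arguments occ_sum {gamma} hg {S A P} hP.

Section Value.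
Variable gamma : R.
Hypothesis hg : 0 < gamma < 1.
Variables (S A : finType) (P : S -> A -> S -> R).
Hypothesis hP : is_transition P.

Definition value (mu : S -> R) (w : S -> A -> R) (pi : S -> A -> R) : R :=
  \rsum_(s : S) \rsum_(a : A) Lambda P gamma pi mu s a * w s a.

Definition weight_norm (w : S -> A -> R) : R := \rsum_(s : S) \rsum_(a : A) Rabs (w s a).

(* Lambda = occ * pi, and both factors lie in [0,1] and are Lipschitz. *)
Lemma Lambda_lip pi pi' mu s a : is_policy pi -> is_policy pi' -> is_distr mu ->
  Rabs (Lambda P gamma pi mu s a - Lambda P gamma pi' mu s a) <=
  (gamma / (1 - gamma) + 1) * dd pi pi'.
Proof.
move=> hp hp' hm; rewrite /Lambda.
have -> : occ P gamma pi mu s * pi s a - occ P gamma pi' mu s * pi' s a =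
  (occ P gamma pi mu s - occ P gamma pi' mu s) * pi s a +
  occ P gamma pi' mu s * (pi s a - pi' s a) by ring.
apply: Rle_trans (Rabs_triang _ _) _.
rewrite (Rabs_mult (_ - _)) (Rabs_mult (occ P gamma pi' mu s)).
rewrite (Rabs_right (pi s a)); last by apply: Rle_ge; case: hp.
have [o0 o1] := occ_bounds hg hP pi' mu s hp' hm.
rewrite (Rabs_right (occ P gamma pi' mu s)); last lra.
have h1 := occ_lip hg hP pi pi' mu s hp hp' hm.
have p0 := proj1 hp s a; have p1 := policy_le1 pi s a hp.
have h2 := abs_le_dd pi pi' s a.
have hd := dd_ge0 pi pi'.
have hk : 0 <= gamma / (1 - gamma).
  by apply: Rmult_le_pos; [lra | apply: Rlt_le; apply: Rinv_0_lt_compat; lra].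
have hda := Rabs_pos (pi s a - pi' s a).
have hdo := Rabs_pos (occ P gamma pi mu s - occ P gamma pi' mu s).
nra.
Qed.

Lemma value_lipschitz mu w : is_distr mu ->
  lipschitz_on (@is_policy S A) (value mu w) (weight_norm w * (gamma / (1 - gamma) + 1)).
Proof.
move=> hm pi pi' hp hp'; rewrite /value -rsum_sub.
apply: Rle_trans (_ : _ <= \rsum_(s : S) \rsum_(a : A)
                             (Rabs (w s a) * ((gamma / (1 - gamma) + 1) * dd pi pi'))) _.
  apply: Rle_trans (rsum_abs _) _; apply: rsum_le => s.
  rewrite -rsum_sub; apply: Rle_trans (rsum_abs _) _; apply: rsum_le => a.
  rewrite -Rmult_minus_distr_r Rabs_mult Rmult_comm.
  by apply: Rmult_le_compat_l; [apply: Rabs_pos | apply: Lambda_lip].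
apply: Req_le; rewrite /weight_norm Rmult_assoc -rsum_mulr.
by apply: eq_bigr => s _; rewrite rsum_mulr.
Qed.
End Value.
Arguments value gamma {S A} P. Arguments weight_norm {S A}.
Arguments value_lipschitz {gamma} hg {S A P} hP.

Section Subsequences.

Lemma increasing_ge_id (phi : nat -> nat) :
  (forall n, (phi n < phi n.+1)%nat) -> forall n, (n <= phi n)%nat.
Proof. by move=> h; elim=> [|n IH] //; apply: leq_ltn_trans IH (h n). Qed.

Lemma subseq_cv (u : nat -> R) l (phi : nat -> nat) :
  Un_cv u l -> (forall n, (phi n < phi n.+1)%nat) -> Un_cv (fun n => u (phi n)) l.
Proof.
move=> hu hphi eps he; have [N hN] := hu eps he; exists N => n /leP hn.
by apply: hN; apply/leP; apply: leq_trans hn (increasing_ge_id _ hphi n).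
Qed.

(* Indices realising that l is a cluster value of u: some p >= N with
   |u p - l| < 1/(k+1); iterating gives an increasing sequence of indices. *)
Definition cluster_index (u : nat -> R) (l : R) (N k : nat) : nat :=
  epsilon (inhabits 0%nat) (fun p => (N <= p)%nat /\ Rabs (u p - l) < / (INR k + 1)).

Fixpoint cluster_subseq (u : nat -> R) (l : R) (n : nat) : nat :=
  match n with
  | 0 => cluster_index u l 0 0
  | m.+1 => cluster_index u l (cluster_subseq u l m).+1 m.+1
  end.

Lemma cluster_value_subseq (u : nat -> R) l :
  (forall eps N, 0 < eps -> exists p, (N <= p)%nat /\ Rabs (u p - l) < eps) ->
  exists phi : nat -> nat, (forall n, (phi n < phi n.+1)%nat) /\ Un_cv (fun n => u (phi n)) l.
Proof.
move=> H.
have hpick N k : (N <= cluster_index u l N k)%nat /\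
                 Rabs (u (cluster_index u l N k) - l) < / (INR k + 1).
  have he : 0 < / (INR k + 1) by apply: Rinv_0_lt_compat; have := pos_INR k; lra.
  have [p hp] := H _ N he.
  exact: (epsilon_spec (inhabits 0%nat) (fun p => (N <= p)%nat /\ Rabs (u p - l) < / (INR k + 1))
            (ex_intro _ p hp)).
exists (cluster_subseq u l); split.
  by move=> n /=; case: (hpick (cluster_subseq u l n).+1 n.+1).
have hb n : Rabs (u (cluster_subseq u l n) - l) < / (INR n + 1).
  by case: n => [|n]; [case: (hpick 0%nat 0%nat) | case: (hpick (cluster_subseq u l n).+1 n.+1)].
move=> eps he; have [N hN] := cv_inv_succ eps he; exists N => n hn.
apply: Rlt_trans (hb n) _; have := hN n hn.
by rewrite /Rdist Rminus_0_r Rabs_right //; apply: Rle_ge; apply: Rlt_le;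
   apply: Rinv_0_lt_compat; have := pos_INR n; lra.
Qed.

Lemma bounded_subseq_cv (v : nat -> R) : (forall n, 0 <= v n <= 1) ->
  exists phi : nat -> nat, (forall n, (phi n < phi n.+1)%nat) /\
    exists l, Un_cv (fun n => v (phi n)) l.
Proof.
move=> hv.
have [l hl] := Rtopology.Bolzano_Weierstrass v (fun c => 0 <= c <= 1)
                 (Rtopology.compact_P3 0 1) hv.
have [phi [hphi hcv]] := cluster_value_subseq v l (fun eps N he =>
  match hl (Rtopology.disc l (mkposreal eps he)) N
          (ex_intro _ (mkposreal eps he) (fun y hy => hy)) with
  | ex_intro p (conj hp1 hp2) => ex_intro _ p (conj (introT leP hp1) hp2)
  end).
by exists phi; split => //; exists l.
Qed.

Lemma family_subseq_cv (K : eqType) (x : nat -> K -> R) :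
  (forall n k, 0 <= x n k <= 1) -> forall L : seq K,
  exists phi : nat -> nat, (forall n, (phi n < phi n.+1)%nat) /\
    forall k, k \in L -> exists l, Un_cv (fun n => x (phi n) k) l.
Proof.
move=> hx; elim=> [|k0 L IH]; first by exists id.
have [phi [hphi hL]] := IH.
have [psi [hpsi [l0 hl0]]] := bounded_subseq_cv (fun n => x (phi n) k0) (fun n => hx _ _).
exists (fun n => phi (psi n)); split.
  by move=> n; apply: (homo_ltn ltn_trans hphi); apply: hpsi.
move=> k; rewrite in_cons => /orP [/eqP ->|hk]; first by exists l0.
have [l hl] := hL k hk; exists l.
exact: (subseq_cv (fun n => x (phi n) k) l psi hl hpsi).
Qed.
End Subsequences.

Section Compactness.
Variables S A : finType.
Implicit Types (C : (S -> A -> R) -> Prop) (F : (S -> A -> R) -> R).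

Definition seq_closed C : Prop :=
  forall (x : nat -> S -> A -> R) (y : S -> A -> R), (forall n, C (x n)) ->
  (forall s a, Un_cv (fun n => x n s a) (y s a)) -> C y.

Lemma unit_box_subseq_cv (x : nat -> S -> A -> R) : (forall n s a, 0 <= x n s a <= 1) ->
  exists (phi : nat -> nat) (y : S -> A -> R), (forall n, (phi n < phi n.+1)%nat) /\
    forall s a, Un_cv (fun n => x (phi n) s a) (y s a).
Proof.
move=> hx.
have [phi [hphi hL]] := @family_subseq_cv _ (fun n (k : S * A) => x n k.1 k.2)
                          (fun n k => hx n k.1 k.2) (index_enum _).
pose y s a := epsilon (inhabits R0) (fun l => Un_cv (fun n => x (phi n) s a) l).
exists phi, y; split => // s a.
have [l hl] := hL (s, a) (mem_index_enum _).
exact: (epsilon_spec (inhabits R0) (fun l => Un_cv (fun n => x (phi n) s a) l)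
          (ex_intro _ l hl)).
Qed.

Lemma dd_cv0 (x : nat -> S -> A -> R) y :
  (forall s a, Un_cv (fun n => x n s a) (y s a)) -> Un_cv (fun n => dd (x n) y) 0.
Proof.
move=> hcv.
have h := @cv_big S (index_enum S) (fun s n => \rsum_(a : A) Rabs (x n s a - y s a))
  (fun s => \rsum_(a : A) 0)
  (fun s => @cv_big A (index_enum A) (fun a n => Rabs (x n s a - y s a)) (fun a => 0)
     (fun a => cv_dist0 _ _ (hcv s a))).
have e : \rsum_(s : S) \rsum_(a : A) (0 : R) = 0 by rewrite big1 // => s _; rewrite big1.
by rewrite e in h.
Qed.

Lemma lipschitz_cv C F c (x : nat -> S -> A -> R) y : lipschitz_on C F c ->
  (forall n, C (x n)) -> C y -> Un_cv (fun n => dd (x n) y) 0 ->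
  Un_cv (fun n => F (x n)) (F y).
Proof.
move=> hF hx hy hd eps he.
have [N hN] := CV_mult _ _ _ _ (cv_const c) hd eps he.
exists N => n hn; rewrite /Rdist; apply: Rle_lt_trans (hF _ _ (hx n) hy) _.
by have := hN n hn; rewrite /Rdist Rmult_0_r Rminus_0_r; move/(Rle_lt_trans _ _ _ (RRle_abs _)).
Qed.

Arguments lipschitz_cv {C F c x y}.

Lemma policy_seq_closed : seq_closed (@is_policy S A).
Proof.
move=> x y hx hcv; split=> [s a|s].
  by apply: (lim_ge_c (hcv s a)) => n; case: (hx n).
have h := @cv_big A (index_enum A) (fun a n => x n s a) (y s) (hcv s).
apply: (UL_sequence _ _ _ h); apply: cv_ext (cv_const 1) _ => n.
by rewrite (proj2 (hx n) s).
Qed.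

Lemma lipschitz_zero_set_closed C G c : seq_closed C -> lipschitz_on C G c ->
  seq_closed (fun x => C x /\ G x = 0).
Proof.
move=> hC hG x y hx hcv.
have hy : C y by apply: (hC x) => // n; case: (hx n).
split => //; apply: (UL_sequence (fun n => G (x n))).
  by apply: (lipschitz_cv hG) => // [n|]; [case: (hx n) | apply: dd_cv0].
by apply: cv_ext (cv_const 0) _ => n; case: (hx n).
Qed.

(* A Lipschitz function attains its maximum on a nonempty closed subset of the
   unit box: it is bounded there, and a maximizing sequence has a convergent
   subsequence whose limit stays in the set. *)
Lemma lipschitz_max_attained C F c :
  (forall x s a, C x -> 0 <= x s a <= 1) -> seq_closed C -> lipschitz_on C F c ->
  (exists x0, C x0) -> exists xs, C xs /\ forall x, C x -> F x <= F xs.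
Proof.
move=> hbox hC hF [x0 hx0].
pose E v := exists x, C x /\ v = F x.
have hEb : bound E.
  exists (F x0 + Rabs c * \rsum_(s : S) \rsum_(a : A) 1) => v [x [hx ->]].
  have hd : dd x x0 <= \rsum_(s : S) \rsum_(a : A) 1.
    apply: rsum_le => s; apply: rsum_le => a; apply: Rabs_le.
    by have := hbox x s a hx; have := hbox x0 s a hx0; lra.
  have /abs_le_inv := hF x x0 hx hx0.
  have := Rmult_le_compat_r _ _ _ (dd_ge0 x x0) (RRle_abs c).
  have := Rmult_le_compat_l _ _ _ (Rabs_pos c) hd.
  lra.
have [M [hM1 hM2]] := completeness E hEb (ex_intro _ (F x0) (ex_intro _ x0 (conj hx0 erefl))).
have happrox n : exists x, C x /\ M - / (INR n + 1) < F x.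
  apply: NNPP => hno.
  have he : 0 < / (INR n + 1) by apply: Rinv_0_lt_compat; have := pos_INR n; lra.
  suff : M <= M - / (INR n + 1) by lra.
  apply: hM2 => v [x [hx ->]]; apply: Rnot_lt_le => hlt; by apply: hno; exists x.
have [xn hxn] : exists xn : nat -> S -> A -> R, forall n, C (xn n) /\ M - / (INR n + 1) < F (xn n).
  by apply: (choice (fun n x => C x /\ M - / (INR n + 1) < F x)).
have [phi [xs [hphi hcv]]] := unit_box_subseq_cv xn (fun n s a => hbox _ s a (proj1 (hxn n))).
have hxs : C xs by apply: (hC (fun n => xn (phi n))) => // n; case: (hxn (phi n)).
exists xs; split => // x hx.
apply: Rle_trans (hM1 _ (ex_intro _ x (conj hx erefl))) _.
apply: (@Rle_cv_lim (fun n => M - / (INR (phi n) + 1)) (fun n => F (xn (phi n)))).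
- by move=> n; apply: Rlt_le; case: (hxn (phi n)).
- rewrite -[X in Un_cv _ X]Rminus_0_r; apply: CV_minus; first exact: cv_const.
  exact: (subseq_cv _ _ _ cv_inv_succ hphi).
- apply: (lipschitz_cv hF) => // [n|]; first by case: (hxn (phi n)).
  exact: dd_cv0.
Qed.
End Compactness.
Arguments seq_closed {S A}. Arguments lipschitz_zero_set_closed {S A C G c}.
Arguments lipschitz_max_attained {S A C F c}.

Section ConstantPolicy.
Variable gamma : R.
Hypothesis hg : 0 < gamma < 1.
Variables (S A : finType) (P : S -> A -> S -> R).
Hypothesis hP : is_transition P.

Definition const_policy (a0 : A) : S -> A -> R := fun _ a => if a == a0 then 1 else 0.

Lemma const_policy_is_policy a0 : is_policy (const_policy a0).
Proof.
split=> [s a|s]; first by rewrite /const_policy; case: (a == a0); lra.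
by rewrite (bigD1 a0) //= /const_policy eqxx big1 => [|a /negbTE ->]; lra.
Qed.

Lemma value_const_policy mu (w : S -> A -> R) (wt : A -> R) a0 :
  is_distr mu -> (forall s a, w s a = wt a) ->
  value gamma P mu w (const_policy a0) = wt a0.
Proof.
move=> hm hw; rewrite /value.
rewrite (eq_bigr (fun s => occ P gamma (const_policy a0) mu s * wt a0)) => [|s _].
  by rewrite rsum_mulr (occ_sum hg hP _ _ (const_policy_is_policy a0) hm) Rmult_1_l.
rewrite (bigD1 a0) //= /Lambda /const_policy eqxx big1 => [|a /negbTE ->]; last by ring.
by rewrite hw; ring.
Qed.
End ConstantPolicy.
Arguments const_policy {S A}. Arguments const_policy_is_policy {S A}.
Arguments value_const_policy {gamma} hg {S A P} hP.

Section Fairness.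
Variables St A : finType.
Local Notation S := (bool * St)%type.

Lemma Dz_distr (D : S -> R) z : is_distr D -> 0 < pz D z -> is_distr (Dz D z).
Proof.
move=> [hd0 hd1] hpz; split=> [s|].
  rewrite /Dz; case: ifP => _; last lra.
  by apply: Rmult_le_pos => //; apply: Rlt_le; apply: Rinv_0_lt_compat.
rewrite (eq_bigr (fun p => Dz D z (p.1, p.2))) => [|[] //].
rewrite -(pair_bigA _ (fun b st => Dz D z (b, st))) big_bool /= /Dz /Rdiv.
case: z hpz => hpz /=;
  [rewrite [X in _ + X]big1 // Rplus_0_r | rewrite [X in X + _]big1 // Rplus_0_l];
  by rewrite rsum_mulr; apply: Rinv_r; apply: Rgt_not_eq.
Qed.
Arguments Dz_distr {D z}.

Lemma rho_z_value D P gamma rho (pi : S -> A -> R) z :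
  rho_z D P gamma rho pi z = value gamma P (Dz D z) rho pi.
Proof. by []. Qed.

Definition parity_gap D P gamma rho (pi : S -> A -> R) : R :=
  rho_z D P gamma rho pi maj - rho_z D P gamma rho pi min.

Lemma demographic_parity_gap D P gamma rho pi :
  demographic_parity D P gamma rho pi <-> parity_gap D P gamma rho pi = 0.
Proof. by rewrite /demographic_parity /parity_gap; split; lra. Qed.

Lemma parity_gap_lipschitz D P gamma rho :
  0 < gamma < 1 -> is_transition P -> is_distr D -> 0 < pz D maj -> 0 < pz D min ->
  lipschitz_on (@is_policy S A) (parity_gap D P gamma rho)
    (2 * weight_norm rho * (gamma / (1 - gamma) + 1)).
Proof.
move=> hg hP hD hmaj hmin pi pi' hp hp'.
apply: Rle_trans (lipschitz_sub (value_lipschitz hg hP _ rho (Dz_distr hD hmaj))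
                    (value_lipschitz hg hP _ rho (Dz_distr hD hmin)) pi pi' hp hp') _.
(* the constants differ only by the coercion wrapping the state type S *)
by apply: Req_le; rewrite /reverse_coercion; ring.
Qed.
End Fairness.
Arguments Dz_distr {St D z}. Arguments rho_z_value {St A}. Arguments parity_gap {St A}.
Arguments demographic_parity_gap {St A}. Arguments parity_gap_lipschitz {St A}.

Theorem theorem2 (St A : finType)
  (D : bool * St -> R) (P : bool * St -> A -> bool * St -> R)
  (Rw : bool * St -> A -> R) (gamma : R) (rho : bool * St -> A -> R)
  (hSt : (0 < #|St|)%N) (hA : (0 < #|A|)%N)
  (hD : is_distr D) (hP : is_transition P)
  (hgamma : 0 < gamma < 1)
  (hpmaj : 0 < pz D maj) (hpmin : 0 < pz D min)
  (hrho : exists rhot : A -> R, forall s a, rho s a = rhot a) :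
  exists pis : bool * St -> A -> R,
    is_policy pis /\ demographic_parity D P gamma rho pis /\
    forall pi, is_policy pi -> demographic_parity D P gamma rho pi ->
      Rret D P Rw gamma pi <= Rret D P Rw gamma pis.
Proof.
have [rhot hrhot] := hrho.
have [a0 _] : exists a0 : A, a0 \in A by apply/card_gt0P.
pose feasible pi := is_policy pi /\ parity_gap D P gamma rho pi = 0.
have hbox pi s a : feasible pi -> 0 <= pi s a <= 1.
  by case=> hp _; split; [case: hp | apply: policy_le1].
have hclosed : seq_closed feasible.
  apply: lipschitz_zero_set_closed (policy_seq_closed _ _) _.
  exact: parity_gap_lipschitz.
(* the constant policy a0 gives both groups the reward rhot a0 *)
have hfeas0 : feasible (const_policy a0).
  split; first exact: const_policy_is_policy.
  rewrite /parity_gap !rho_z_value.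
  by rewrite !(value_const_policy hgamma hP _ _ rhot) //; [ring | apply: Dz_distr..].
(* R^(pi) = value D Rw pi / (1 - gamma) is Lipschitz on the feasible set *)
have hinv : 0 <= / (1 - gamma) by apply: Rlt_le; apply: Rinv_0_lt_compat; lra.
have hret : lipschitz_on feasible (fun pi => / (1 - gamma) * value gamma P D Rw pi) _ :=
  lipschitz_on_subset (fun pi => @proj1 _ _)
    (lipschitz_scale _ hinv (value_lipschitz hgamma hP D Rw hD)).
have [pis [[hpis hgap] hmax]] :=
  lipschitz_max_attained hbox hclosed hret (ex_intro _ _ hfeas0).
exists pis; split => //; split; first exact/demographic_parity_gap.
by move=> pi hpi /demographic_parity_gap hdp; apply: hmax.
Qed.
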